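(* Let $d>d_*=\frac{\sqrt[4]{27}}{4}$ and let $\kappa$ be a positive, non-constant solution, defined on its maximal interval, of the equation $$\kappa^{3/4}\frac{d^2}{ds^2}\Big(\frac{1}{\kappa^{3/4}}\Big)-3\kappa^2+1=0$$ satisfying the first integral $$\kappa_s^2=\tfrac{16}{9}\kappa^2\big(16\,d\,\kappa^{3/2}-9\kappa^2-1\big).$$ Then $\kappa$ is defined on all of $\mathbb R$ and is periodic.
   Context: This equation is the Euler–Lagrange equation (with $c=1$) of the functional $\Theta(\gamma)=\int_\gamma\kappa^{1/4}\,ds$ on curves in $\mathbb S^2$, where $s$ is arc length and $\kappa$ the geodesic curvature; it governs the curvature of the profile curve of a rotational biconservative surface in $\mathbb S^3$ with nowhere-vanishing gradient of the mean curvature. *)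

From Stdlib Require Import Reals.
From Coquelicot Require Import Coquelicot.
Open Scope R_scope.

Definition d_star : R := Rpower 27 (1/4) / 4.

Definition in_int (a b : Rbar) (s : R) : Prop := Rbar_lt a s /\ Rbar_lt s b.

Definition is_sol (d : R) (a b : Rbar) (k : R -> R) : Prop :=
  Rbar_lt a b /\
  forall s, in_int a b s ->
    0 < k s /\
    ex_derive k s /\
    ex_derive (Derive k) s /\
    Rpower (k s) (3/4) * Derive_n (fun x => Rpower (k x) (-(3/4))) 2 s
      - 3 * (k s)^2 + 1 = 0 /\
    (Derive k s)^2 =
      16/9 * (k s)^2 * (16 * d * Rpower (k s) (3/2) - 9 * (k s)^2 - 1).

Definition maximal_sol (d : R) (a b : Rbar) (k : R -> R) : Prop :=
  is_sol d a b k /\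
  forall (a' b' : Rbar) (k' : R -> R),
    Rbar_le a' a -> Rbar_le b b' -> is_sol d a' b' k' ->
    (forall s, in_int a b s -> k' s = k s) ->
    a' = a /\ b' = b.

Definition nonconstant_on (a b : Rbar) (k : R -> R) : Prop :=
  exists s t, in_int a b s /\ in_int a b t /\ k s <> k t.

(* With [u = k^(-3/4)] the equation becomes the autonomous Newton equation
   [u'' = 3 u^(-5/3) - u], whose right-hand side is Lipschitz away from [0]; so by Gronwall a
   positive solution is determined by [k] and [k'] at a single point.

   For [d > d_*] the quartic [16 d w - w^4 - 9] has two positive roots [w1 < w2] and factors as
   [(w - w1) (w2 - w) Q(w)] with [Q > 0].  In the variable [w = k^(-1/2)] the first integral reads
   [w'^2 = 4/9 (16 d w - w^4 - 9) / w^2], and it is solved on all of R by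
   [w = (w1 + w2)/2 - (w2 - w1)/2 cos psi], where [psi' = F(psi)] for a positive 2pi-periodic [F].
   The phase [psi] is the inverse of [x |-> int_0^x 1/F], hence gains 2pi in a fixed time [T].
   Every initial value allowed by the first integral is attained along such a solution, so by
   uniqueness and maximality [k] is this global, [T]-periodic solution. *)

From Stdlib Require Import Reals Ranalysis5 Lra Psatz.
From Coquelicot Require Import Coquelicot.
Open Scope R_scope.

Lemma Rpower_pow_l (z y : R) (n : nat) : 0 < z -> Rpower (z ^ n) y = Rpower z (INR n * y).
Proof. intros Hz. rewrite <- Rpower_pow, Rpower_mult by exact Hz. reflexivity. Qed.

Lemma Rpower_inv_pow_l (z y : R) (n : nat) :
  0 < z -> Rpower (/ z ^ n) y = Rpower z (- (INR n * y)).
Proof.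
  intros Hz. rewrite <- Rpower_pow, <- Rpower_Ropp, Rpower_mult by exact Hz.
  f_equal. ring.
Qed.

Lemma Rpower_nat (z e : R) (n : nat) : 0 < z -> e = INR n -> Rpower z e = z ^ n.
Proof. intros Hz ->. exact (Rpower_pow n z Hz). Qed.

Lemma Rpower_neg_nat (z e : R) (n : nat) : 0 < z -> e = - INR n -> Rpower z e = / z ^ n.
Proof. intros Hz ->. rewrite Rpower_Ropp, Rpower_pow by exact Hz. reflexivity. Qed.

Lemma Rpower_gt_0 (x y : R) : 0 < Rpower x y.
Proof. apply exp_pos. Qed.

Lemma Rpower_div_self (x y : R) : 0 < x -> Rpower x y / x = Rpower x (y - 1).
Proof.
  intros Hx. unfold Rminus. rewrite Rpower_plus, Rpower_Ropp, Rpower_1 by exact Hx.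
  reflexivity.
Qed.

Lemma is_derive_Rpower_l (y x : R) : 0 < x ->
  is_derive (fun v => Rpower v y) x (y * Rpower x y / x).
Proof.
  intros Hx. apply is_derive_Reals. unfold Rdiv. rewrite Rmult_assoc. fold (Rpower x y / x).
  rewrite Rpower_div_self by exact Hx.
  apply derivable_pt_lim_power, Hx.
Qed.

Lemma nonincreasing_of_derive (f df : R -> R) (a b : R) : a <= b ->
  (forall x, a <= x <= b -> is_derive f x (df x)) ->
  (forall x, a <= x <= b -> df x <= 0) -> f b <= f a.
Proof.
  intros Hab Hd Hneg.
  destruct (MVT_gen f a b df) as (c & Hc & Hmvt);
    rewrite ?Rmin_left, ?Rmax_right in * by exact Hab.
  - intros x Hx. apply Hd. lra.
  - intros x Hx. apply derivable_continuous_pt. exists (df x).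
    apply is_derive_Reals, Hd, Hx.
  - specialize (Hneg c Hc). nra.
Qed.

(* Multiplying [e] by [exp (-+ C s)] makes it monotone, so it cannot leave [0]. *)
Lemma gronwall_zero (e de : R -> R) (C s0 t : R) :
  (forall s, Rmin s0 t <= s <= Rmax s0 t -> is_derive e s (de s)) ->
  (forall s, Rmin s0 t <= s <= Rmax s0 t -> Rabs (de s) <= C * e s) ->
  0 <= e t -> e s0 = 0 -> e t = 0.
Proof.
  intros Hd Hbound He0 Es0.
  destruct (Rle_lt_dec s0 t) as [Hst | Hts].
  - rewrite Rmin_left, Rmax_right in * by exact Hst.
    assert (Hmono : e t * exp (- (C * t)) <= e s0 * exp (- (C * s0))).
    { apply (nonincreasing_of_derive (fun s => e s * exp (- (C * s)))
               (fun s => (de s - C * e s) * exp (- (C * s))) s0 t Hst).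
      - intros x Hx. auto_derive; [exists (de x); apply Hd, Hx|].
        change (Derive (fun y => e y) x) with (Derive e x).
        rewrite (is_derive_unique _ _ _ (Hd x Hx)). ring.
      - intros x Hx. pose proof (Hbound x Hx). pose proof (Rle_abs (de x)).
        pose proof (exp_pos (- (C * x))). nra. }
    rewrite Es0 in Hmono. pose proof (exp_pos (- (C * t))). nra.
  - rewrite Rmin_right, Rmax_left in * by lra.
    assert (Hmono : - (e s0 * exp (C * s0)) <= - (e t * exp (C * t))).
    { apply (nonincreasing_of_derive (fun s => - (e s * exp (C * s)))
               (fun s => - ((de s + C * e s) * exp (C * s))) t s0); [lra| |].
      - intros x Hx. auto_derive; [exists (de x); apply Hd, Hx|].
        change (Derive (fun y => e y) x) with (Derive e x).
        rewrite (is_derive_unique _ _ _ (Hd x Hx)). ring.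
      - intros x Hx. pose proof (Hbound x Hx). pose proof (Rle_abs (- de x)).
        rewrite Rabs_Ropp in *. pose proof (exp_pos (C * x)). nra. }
    rewrite Es0 in Hmono. pose proof (exp_pos (C * t)). nra.
Qed.

Definition lipschitz_on_ge (g : R -> R) (m L : R) : Prop :=
  forall x y, m <= x -> m <= y -> Rabs (g x - g y) <= L * Rabs (x - y).

Definition pos_solution_at (g u du : R -> R) (s : R) : Prop :=
  0 < u s /\ is_derive u s (du s) /\ is_derive du s (g (u s)).

Lemma energy_derive_bound (a b q L : R) : 0 <= L -> Rabs q <= L * Rabs a ->
  Rabs (2 * a * b + 2 * b * q) <= (1 + L) * (a ^ 2 + b ^ 2).
Proof.
  intros HL Hq.
  assert (Htri : Rabs (2 * a * b + 2 * b * q) <= 2 * Rabs a * Rabs b + 2 * Rabs b * Rabs q).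
  { eapply Rle_trans; [apply Rabs_triang|].
    rewrite !Rabs_mult, (Rabs_right 2) by lra. lra. }
  pose proof (pow2_abs a). pose proof (pow2_abs b).
  pose proof (Rabs_pos a). pose proof (Rabs_pos b).
  pose proof (pow2_ge_0 (Rabs a - Rabs b)).
  assert (Rabs b * Rabs q <= Rabs b * (L * Rabs a)) by (apply Rmult_le_compat_l; lra).
  nra.
Qed.

Lemma second_order_unique (g u1 u2 du1 du2 : R -> R) (s0 t : R) :
  (forall m, 0 < m -> exists L, 0 <= L /\ lipschitz_on_ge g m L) ->
  (forall s, Rmin s0 t <= s <= Rmax s0 t ->
     pos_solution_at g u1 du1 s /\ pos_solution_at g u2 du2 s) ->
  u1 s0 = u2 s0 -> du1 s0 = du2 s0 -> u1 t = u2 t.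
Proof.
  intros Hlip Hsol E0 E1.
  assert (Hmm : Rmin s0 t <= Rmax s0 t) by (apply Rle_trans with s0; [apply Rmin_l|apply Rmax_l]).
  assert (Hcont : forall u du, (forall s, Rmin s0 t <= s <= Rmax s0 t -> is_derive u s (du s)) ->
            forall s, Rmin s0 t <= s <= Rmax s0 t -> continuity_pt u s).
  { intros u du Hd s Hs. apply derivable_continuous_pt. exists (du s).
    apply is_derive_Reals, Hd, Hs. }
  destruct (continuity_ab_min u1 _ _ Hmm) as (a1 & Ha1 & Ia1).
  { apply (Hcont u1 du1). intros s Hs. apply Hsol, Hs. }
  destruct (continuity_ab_min u2 _ _ Hmm) as (a2 & Ha2 & Ia2).
  { apply (Hcont u2 du2). intros s Hs. apply Hsol, Hs. }
  set (m := Rmin (u1 a1) (u2 a2)).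
  assert (Hm : 0 < m).
  { apply Rmin_glb_lt; [apply (Hsol a1 Ia1) | apply (Hsol a2 Ia2)]. }
  destruct (Hlip m Hm) as (L & HL0 & HL).
  set (e := fun s => (u1 s - u2 s) ^ 2 + (du1 s - du2 s) ^ 2).
  assert (He : e t = 0).
  { apply (gronwall_zero e (fun s => 2 * (u1 s - u2 s) * (du1 s - du2 s)
             + 2 * (du1 s - du2 s) * (g (u1 s) - g (u2 s))) (1 + L) s0 t).
    - intros s Hs. destruct (Hsol s Hs) as ((_ & D1 & DD1) & (_ & D2 & DD2)).
      unfold e. auto_derive.
      + split; [eexists; exact D1|]. split; [eexists; exact D2|].
        split; [eexists; exact DD1|]. split; [eexists; exact DD2|]. auto.
      + change (Derive (fun y => u1 y) s) with (Derive u1 s).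
        change (Derive (fun y => u2 y) s) with (Derive u2 s).
        change (Derive (fun y => du1 y) s) with (Derive du1 s).
        change (Derive (fun y => du2 y) s) with (Derive du2 s).
        rewrite (is_derive_unique _ _ _ D1), (is_derive_unique _ _ _ D2),
          (is_derive_unique _ _ _ DD1), (is_derive_unique _ _ _ DD2). ring.
    - intros s Hs. apply energy_derive_bound; [exact HL0|].
      apply HL; [apply Rle_trans with (u1 a1); [apply Rmin_l|apply Ha1, Hs]
               | apply Rle_trans with (u2 a2); [apply Rmin_r|apply Ha2, Hs]].
    - unfold e. pose proof (pow2_ge_0 (u1 t - u2 t)). pose proof (pow2_ge_0 (du1 t - du2 t)). lra.
    - unfold e. rewrite E0, E1. ring. }
  unfold e in He. pose proof (pow2_ge_0 (u1 t - u2 t)). pose proof (pow2_ge_0 (du1 t - du2 t)).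
  nra.
Qed.

Definition u_force (u : R) : R := 3 * Rpower u (- (5 / 3)) - u.

Lemma is_derive_u_force (x : R) : 0 < x ->
  is_derive u_force x (- (5 * Rpower x (- (8 / 3))) - 1).
Proof.
  intros Hx. unfold u_force, Rpower. auto_derive; [exact Hx|].
  fold (Rpower x (- (5 / 3))) (Rpower x (- (8 / 3))).
  replace (- (8 / 3)) with (- (5 / 3) - 1) by field.
  rewrite <- Rpower_div_self by exact Hx. field. lra.
Qed.

Lemma u_force_lipschitz (m : R) : 0 < m ->
  exists L, 0 <= L /\ lipschitz_on_ge u_force m L.
Proof.
  intros Hm. exists (5 * Rpower m (- (8 / 3)) + 1).
  split; [pose proof (Rpower_gt_0 m (- (8 / 3))); lra|].
  intros x y Hx Hy.
  assert (Hmin : m <= Rmin y x) by (apply Rmin_glb; lra).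
  destruct (MVT_gen u_force y x (fun c => - (5 * Rpower c (- (8 / 3))) - 1))
    as (c & Hc & Hmvt).
  - intros c Hc. apply is_derive_u_force. lra.
  - intros c Hc. apply derivable_continuous_pt.
    exists (- (5 * Rpower c (- (8 / 3))) - 1). apply is_derive_Reals, is_derive_u_force. lra.
  - assert (Hc_pow : Rpower c (- (8 / 3)) <= Rpower m (- (8 / 3))).
    { rewrite !Rpower_Ropp. apply Rinv_le_contravar; [apply Rpower_gt_0|].
      apply Rle_Rpower_l; lra. }
    rewrite Hmvt, Rabs_mult.
    apply Rmult_le_compat_r; [apply Rabs_pos|].
    pose proof (Rpower_gt_0 c (- (8 / 3))).
    rewrite Rabs_left by lra. lra.
Qed.

Lemma in_int_between (a b : Rbar) (s0 t s : R) : in_int a b s0 -> in_int a b t ->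
  Rmin s0 t <= s <= Rmax s0 t -> in_int a b s.
Proof.
  intros [Ha0 Hb0] [Hat Hbt] Hs. split.
  - apply (Rbar_lt_le_trans a (Rmin s0 t) s); [now apply Rmin_case | simpl; lra].
  - apply (Rbar_le_lt_trans s (Rmax s0 t) b); [simpl; lra | now apply Rmax_case].
Qed.

Lemma locally_in_int (a b : Rbar) (s : R) : in_int a b s -> locally s (in_int a b).
Proof.
  intros [Ha Hb]. apply filter_and; [apply (open_Rbar_gt' s a Ha) | apply (open_Rbar_lt' s b Hb)].
Qed.

Definition u_of (k : R -> R) (s : R) : R := Rpower (k s) (- (3 / 4)).

Lemma is_derive_u_of (k : R -> R) (s dk : R) : 0 < k s -> is_derive k s dk ->
  is_derive (u_of k) s (- (3 / 4) * u_of k s * (dk / k s)).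
Proof.
  intros Hk Dk. unfold u_of.
  eapply is_derive_ext; [intros t; reflexivity|].
  replace (- (3 / 4) * Rpower (k s) (- (3 / 4)) * (dk / k s))
    with (dk * (- (3 / 4) * Rpower (k s) (- (3 / 4)) / k s)) by (field; lra).
  apply (is_derive_comp (fun v => Rpower v (- (3 / 4))) k); [|exact Dk].
  apply is_derive_Rpower_l, Hk.
Qed.

Lemma Rpower_34_mul_inv (x : R) : 0 < x -> Rpower x (3 / 4) * Rpower x (- (3 / 4)) = 1.
Proof.
  intros Hx. rewrite <- Rpower_plus. replace (3 / 4 + - (3 / 4)) with 0 by ring.
  apply Rpower_O, Hx.
Qed.

Lemma sqr_mul_Rpower_34 (x : R) : 0 < x ->
  x ^ 2 * Rpower x (- (3 / 4)) = Rpower (Rpower x (- (3 / 4))) (- (5 / 3)).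
Proof.
  intros Hx. rewrite <- (Rpower_nat x 2 2) by (simpl; lra).
  rewrite Rpower_mult, <- Rpower_plus. f_equal. field.
Qed.

Lemma u_of_inj (k1 k2 : R -> R) (s : R) : 0 < k1 s -> 0 < k2 s ->
  u_of k1 s = u_of k2 s -> k1 s = k2 s.
Proof.
  unfold u_of. intros H1 H2 E.
  apply (f_equal (fun v => Rpower v (- (4 / 3)))) in E.
  rewrite !Rpower_mult in E. replace (- (3 / 4) * - (4 / 3)) with 1 in E by field.
  rewrite !Rpower_1 in E by assumption. exact E.
Qed.

Lemma is_derive_u_of_sol (d : R) (a b : Rbar) (k : R -> R) : is_sol d a b k ->
  forall s, in_int a b s -> is_derive (u_of k) s (- (3 / 4) * u_of k s * (Derive k s / k s)).
Proof.
  intros [_ Hsol] s Hs. destruct (Hsol s Hs) as (Hk & [dk Dk] & _).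
  rewrite (is_derive_unique _ _ _ Dk). apply is_derive_u_of; assumption.
Qed.

Lemma is_sol_reduced (d : R) (a b : Rbar) (k : R -> R) : is_sol d a b k ->
  forall s, in_int a b s -> pos_solution_at u_force (u_of k) (Derive (u_of k)) s.
Proof.
  intros Hk_sol s Hs. pose proof (is_derive_u_of_sol d a b k Hk_sol) as Du.
  destruct Hk_sol as [_ Hsol].
  destruct (Hsol s Hs) as (Hk & [dk Dk] & [ddk DDk] & Hode & _).
  split; [apply Rpower_gt_0|]. split.
  { rewrite (is_derive_unique _ _ _ (Du s Hs)). apply Du, Hs. }
  assert (Hex : ex_derive (Derive (u_of k)) s).
  { apply (ex_derive_ext_loc (fun t => - (3 / 4) * u_of k t * (Derive k t / k t))).
    - apply (filter_imp (in_int a b)); [|apply locally_in_int, Hs].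
      intros t Ht. symmetry. apply is_derive_unique, Du, Ht.
    - apply ex_derive_mult; [apply ex_derive_mult | apply ex_derive_div].
      + apply ex_derive_const.
      + exists (- (3 / 4) * u_of k s * (Derive k s / k s)). apply Du, Hs.
      + exists ddk. exact DDk.
      + exists dk. exact Dk.
      + lra. }
  replace (u_force (u_of k s)) with (Derive (Derive (u_of k)) s);
    [exact (Derive_correct _ _ Hex)|].
  change (Derive (Derive (u_of k)) s)
    with (Derive_n (fun x => Rpower (k x) (- (3 / 4))) 2 s).
  unfold u_force, u_of. rewrite <- sqr_mul_Rpower_34 by exact Hk.
  pose proof (Rpower_34_mul_inv (k s) Hk) as Hinv.
  set (P := Rpower (k s) (3 / 4)) in *. set (U := Rpower (k s) (- (3 / 4))) in *.
  set (D2 := Derive_n _ 2 s) in *.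
  assert (HD2 : P * D2 = 3 * k s ^ 2 - 1) by lra.
  replace D2 with (U * (P * D2)) by (rewrite <- Rmult_assoc, (Rmult_comm U), Hinv; ring).
  rewrite HD2. ring.
Qed.

Lemma is_sol_restrict (d : R) (a b a' b' : Rbar) (k : R -> R) :
  Rbar_le a' a -> Rbar_le b b' -> Rbar_lt a b -> is_sol d a' b' k -> is_sol d a b k.
Proof.
  intros Ha Hb Hab [_ Hsol]. split; [exact Hab|].
  intros s [Has Hsb]. apply Hsol.
  split; [apply (Rbar_le_lt_trans _ _ _ Ha Has) | apply (Rbar_lt_le_trans _ _ _ Hsb Hb)].
Qed.

Lemma is_sol_unique (d : R) (a b : Rbar) (k1 k2 : R -> R) (s0 : R) :
  is_sol d a b k1 -> is_sol d a b k2 -> in_int a b s0 ->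
  k1 s0 = k2 s0 -> Derive k1 s0 = Derive k2 s0 ->
  forall t, in_int a b t -> k1 t = k2 t.
Proof.
  intros H1 H2 Hs0 E0 E1 t Ht.
  assert (Hpos : forall k, is_sol d a b k -> forall s, in_int a b s -> 0 < k s)
    by (intros k [_ Hk] s Hs; apply (Hk s Hs)).
  apply u_of_inj; [apply (Hpos _ H1 t Ht) | apply (Hpos _ H2 t Ht) |].
  apply (second_order_unique u_force _ _ (Derive (u_of k1)) (Derive (u_of k2)) s0 t
           u_force_lipschitz).
  - intros s Hs. pose proof (in_int_between a b s0 t s Hs0 Ht Hs) as Hin.
    split; [apply (is_sol_reduced d a b k1 H1 s Hin) | apply (is_sol_reduced d a b k2 H2 s Hin)].
  - unfold u_of. rewrite E0. reflexivity.
  - rewrite (is_derive_unique _ _ _ (is_derive_u_of_sol d a b k1 H1 s0 Hs0)),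
      (is_derive_unique _ _ _ (is_derive_u_of_sol d a b k2 H2 s0 Hs0)).
    unfold u_of. rewrite E0, E1. reflexivity.
Qed.

Section PeriodicFlow.

Variables (f : R -> R) (M p : R).
Hypothesis f_cont : forall x, continuous f x.
Hypothesis f_bounds : forall x, 0 < f x <= M.
Hypothesis f_periodic : forall x, f (x + p) = f x.

Definition travel_time (x : R) : R := RInt (fun y => / f y) 0 x.

Lemma inv_f_cont (x : R) : continuous (fun y => / f y) x.
Proof.
  apply continuity_pt_filterlim, continuity_pt_inv.
  - apply continuity_pt_filterlim, f_cont.
  - apply Rgt_not_eq, f_bounds.
Qed.

Lemma ex_RInt_inv_f (x y : R) : ex_RInt (fun z => / f z) x y.
Proof. apply (@ex_RInt_continuous R_CompleteNormedModule). intros; apply inv_f_cont. Qed.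

Lemma is_derive_travel_time (x : R) : is_derive travel_time x (/ f x).
Proof.
  apply (is_derive_RInt (fun y => / f y) travel_time 0 x); [|apply inv_f_cont].
  apply filter_forall. intros y. apply (RInt_correct (fun z => / f z)), ex_RInt_inv_f.
Qed.

Lemma continuity_travel_time (x : R) : continuity_pt travel_time x.
Proof.
  apply derivable_continuous_pt. exists (/ f x). apply is_derive_Reals, is_derive_travel_time.
Qed.

Lemma travel_time_lower_bound (x y : R) : x <= y -> (y - x) / M <= travel_time y - travel_time x.
Proof.
  intros Hxy. destruct (MVT_gen travel_time x y (fun z => / f z)) as (c & _ & Hc).
  - intros; apply is_derive_travel_time.
  - intros; apply continuity_travel_time.
  - rewrite Hc. destruct (f_bounds c) as [Hf HfM].
    assert (/ M <= / f c) by (apply Rinv_le_contravar; lra).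
    unfold Rdiv. rewrite Rmult_comm. apply Rmult_le_compat_r; lra.
Qed.

Lemma travel_time_increasing (x y : R) : x < y -> travel_time x < travel_time y.
Proof.
  intros Hxy. pose proof (travel_time_lower_bound x y (Rlt_le _ _ Hxy)).
  assert (0 < M) by (pose proof (f_bounds x); lra).
  assert (0 < (y - x) / M) by (apply Rdiv_lt_0_compat; lra). lra.
Qed.

Lemma travel_time_inj (x y : R) : travel_time x = travel_time y -> x = y.
Proof.
  intros E. destruct (Rtotal_order x y) as [H | [H | H]]; [| exact H |];
    apply travel_time_increasing in H; lra.
Qed.

Lemma travel_time_surj (s : R) : {x | travel_time x = s}.
Proof.
  assert (HM : 0 < M) by (pose proof (f_bounds 0); lra).
  set (L := M * (Rabs s + 1)).
  assert (HL : 0 < L) by (unfold L; pose proof (Rabs_pos s); nra).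
  assert (T0 : travel_time 0 = 0) by apply (RInt_point (V := R_CompleteNormedModule)).
  pose proof (travel_time_lower_bound 0 L (Rlt_le _ _ HL)) as Hup.
  pose proof (travel_time_lower_bound (- L) 0 ltac:(lra)) as Hlow.
  replace ((L - 0) / M) with (Rabs s + 1) in Hup by (unfold L; field; lra).
  replace ((0 - - L) / M) with (Rabs s + 1) in Hlow by (unfold L; field; lra).
  pose proof (Rle_abs s). pose proof (Rle_abs (- s)). rewrite Rabs_Ropp in *.
  destruct (IVT (fun x => travel_time x - s) (- L) L) as (x & _ & Hx).
  - intros x. apply continuity_pt_minus; [apply continuity_travel_time | apply continuity_pt_const].
    intros ??; reflexivity.
  - lra.
  - lra.
  - lra.
  - exists x. lra.
Qed.

Definition phase (s : R) : R := proj1_sig (travel_time_surj s).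

Lemma travel_time_phase (s : R) : travel_time (phase s) = s.
Proof. exact (proj2_sig (travel_time_surj s)). Qed.

Lemma phase_travel_time (x : R) : phase (travel_time x) = x.
Proof. apply travel_time_inj, travel_time_phase. Qed.

Lemma phase_increasing (s t : R) : s <= t -> phase s <= phase t.
Proof.
  intros Hst. destruct (Rle_lt_dec (phase s) (phase t)) as [H | H]; [exact H|].
  apply travel_time_increasing in H. rewrite !travel_time_phase in H. lra.
Qed.

(* Inverse function theorem for the increasing bijection [travel_time]. *)
Lemma is_derive_phase (s : R) : is_derive phase s (f (phase s)).
Proof.
  assert (Hder : forall x, derivable_pt travel_time x)
    by (intros x; exists (/ f x); apply is_derive_Reals, is_derive_travel_time).
  assert (Hcomp : forall t, comp travel_time phase t = id t) by apply travel_time_phase.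
  assert (Hcont : continuity_pt phase s).
  { apply (continuity_pt_recip_interv travel_time phase (phase s - 1) (phase s + 1)); try lra.
    - intros; apply travel_time_increasing; assumption.
    - intros; apply Hcomp.
    - intros y H1 H2. rewrite <- (phase_travel_time (phase s - 1)),
        <- (phase_travel_time (phase s + 1)). split; apply phase_increasing; assumption.
    - intros; apply continuity_travel_time.
    - pose proof (travel_time_phase s).
      pose proof (travel_time_increasing (phase s - 1) (phase s) ltac:(lra)).
      pose proof (travel_time_increasing (phase s) (phase s + 1) ltac:(lra)). lra. }
  assert (Hmono : phase (s - 1) <= phase s <= phase (s + 1))
    by (split; apply phase_increasing; lra).
  pose proof (derivable_pt_lim_recip_interv travel_time phase (s - 1) (s + 1) s
    (fun x _ => Hder x) Hcont ltac:(lra) ltac:(lra) Hmono ltac:(intros; apply Hcomp)) as Hlim.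
  assert (E : derive_pt travel_time (phase s) (Hder (phase s)) = / f (phase s)).
  { apply derive_pt_eq_0, is_derive_Reals, is_derive_travel_time. }
  destruct (f_bounds (phase s)) as [Hf _].
  cbv beta in Hlim. rewrite E in Hlim. apply is_derive_Reals.
  replace (f (phase s)) with (1 / / f (phase s)) by (field; lra).
  apply Hlim. apply Rinv_neq_0_compat. lra.
Qed.

Lemma travel_time_shift (x : R) : travel_time (x + p) = travel_time x + travel_time p.
Proof.
  unfold travel_time. rewrite <- (RInt_Chasles _ 0 p (x + p)) by apply ex_RInt_inv_f.
  rewrite Rplus_comm. f_equal.
  pose proof (RInt_comp_lin (fun y => / f y) 1 p 0 x) as Eshift.
  rewrite Rmult_0_r, Rplus_0_l, Rmult_1_l in Eshift.
  rewrite <- Eshift by apply ex_RInt_inv_f.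
  apply RInt_ext. intros y _. change (scal 1 (/ f (1 * y + p))) with (1 * / f (1 * y + p)).
  rewrite !Rmult_1_l, f_periodic. reflexivity.
Qed.

Lemma phase_shift (s : R) : phase (s + travel_time p) = phase s + p.
Proof.
  apply travel_time_inj. rewrite travel_time_shift, !travel_time_phase. reflexivity.
Qed.

End PeriodicFlow.

Lemma periodic_flow (f : R -> R) (M p x0 s0 : R) :
  (forall x, continuous f x) -> (forall x, 0 < f x <= M) -> (forall x, f (x + p) = f x) -> 0 < p ->
  exists psi T, 0 < T /\ psi s0 = x0 /\ (forall s, is_derive psi s (f (psi s))) /\
    forall s, psi (s + T) = psi s + p.
Proof.
  intros Hc Hb Hp Hp0.
  set (tt := travel_time f).
  set (psi := fun s => phase f M Hc Hb (s - s0 + tt x0)).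
  exists psi, (tt p). split; [|split; [|split]].
  - replace 0 with (tt 0) by apply (RInt_point (V := R_CompleteNormedModule)).
    apply travel_time_increasing with M; assumption.
  - unfold psi. replace (s0 - s0 + tt x0) with (tt x0) by ring. apply phase_travel_time.
  - intros s. unfold psi. eapply is_derive_ext; [intros t; reflexivity|].
    rewrite <- (Rmult_1_l (f _)).
    apply (is_derive_comp (phase f M Hc Hb) (fun t => t - s0 + tt x0));
      [apply is_derive_phase | auto_derive; auto; ring].
  - intros s. unfold psi. replace (s + tt p - s0 + tt x0) with (s - s0 + tt x0 + tt p) by ring.
    apply phase_shift, Hp.
Qed.

Definition quartic (d y : R) : R := 16 * d * y - y ^ 4 - 9.

Section ExplicitSolution.

Variables (d w1 w2 : R).
Hypothesis w_pos : 0 < w1 < w2.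
Hypothesis root_w1 : quartic d w1 = 0.
Hypothesis root_w2 : quartic d w2 = 0.

Definition cofactor (y : R) : R := y ^ 2 + (w1 + w2) * y + ((w1 + w2) ^ 2 - w1 * w2).

Lemma vieta_product : w1 * w2 * ((w1 + w2) ^ 2 - w1 * w2) = 9.
Proof.
  unfold quartic in *.
  apply (Rmult_eq_reg_l (w1 - w2)); [|lra].
  transitivity (w1 * (16 * d * w2 - w2 ^ 4) - w2 * (16 * d * w1 - w1 ^ 4)); [ring|].
  replace (16 * d * w2 - w2 ^ 4) with 9 by lra. replace (16 * d * w1 - w1 ^ 4) with 9 by lra.
  ring.
Qed.

Lemma vieta_sum : (w1 + w2) * ((w1 + w2) ^ 2 - 2 * w1 * w2) = 16 * d.
Proof.
  unfold quartic in *.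
  apply (Rmult_eq_reg_l (w1 - w2)); [|lra].
  transitivity (w1 ^ 4 - w2 ^ 4); [ring|].
  replace (w1 ^ 4) with (16 * d * w1 - 9) by lra. replace (w2 ^ 4) with (16 * d * w2 - 9) by lra.
  ring.
Qed.

Lemma quartic_factor (y : R) : quartic d y = (y - w1) * (w2 - y) * cofactor y.
Proof. unfold quartic, cofactor. rewrite <- vieta_product, <- vieta_sum. ring. Qed.

Lemma cofactor_pos (y : R) : 0 < y -> 0 < cofactor y.
Proof. intros Hy. unfold cofactor. nra. Qed.

(* [psi'^2] as a function of [w = W psi] along a trajectory. *)
Definition speed2 (y : R) : R := 4 / 9 * cofactor y / y ^ 2.

Definition dspeed2 (y : R) : R :=
  4 / 9 * (- (w1 + w2) * y - 2 * ((w1 + w2) ^ 2 - w1 * w2)) / y ^ 3.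

Lemma speed2_pos (y : R) : 0 < y -> 0 < speed2 y.
Proof.
  intros Hy. unfold speed2. pose proof (cofactor_pos y Hy). pose proof (pow_lt y 2 Hy).
  apply Rdiv_lt_0_compat; lra.
Qed.

Lemma speed2_le (y : R) : w1 <= y -> speed2 y <= speed2 w1.
Proof.
  intros Hy.
  assert (E : forall x, 0 < x -> speed2 x =
            4 / 9 * (1 + (w1 + w2) * / x + ((w1 + w2) ^ 2 - w1 * w2) * / (x * x)))
    by (intros x Hx; unfold speed2, cofactor; field; lra).
  rewrite !E by lra.
  assert (/ y <= / w1) by (apply Rinv_le_contravar; lra).
  assert (/ (y * y) <= / (w1 * w1)) by (apply Rinv_le_contravar; nra).
  assert (0 < (w1 + w2) ^ 2 - w1 * w2) by nra.
  apply Rmult_le_compat_l; [lra|].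
  apply Rplus_le_compat; [apply Rplus_le_compat_l|]; apply Rmult_le_compat_l; lra.
Qed.

Lemma is_derive_speed2 (y : R) : 0 < y -> is_derive speed2 y (dspeed2 y).
Proof.
  intros Hy. unfold speed2, dspeed2, cofactor.
  auto_derive; [apply Rgt_not_eq; nra|]. field. lra.
Qed.

Lemma speed_identity (y : R) : 0 < y ->
  (y - w1) * (w2 - y) * speed2 y = 4 / 9 * quartic d y / y ^ 2.
Proof. intros Hy. rewrite quartic_factor. unfold speed2. field. lra. Qed.

(* [w''] as a function of [w] along a trajectory. *)
Definition accel (y : R) : R :=
  ((w1 + w2) / 2 - y) * speed2 y + (y - w1) * (w2 - y) * dspeed2 y / 2.

(* The equation [u'' = u_force u] for [u = w^(3/2)], multiplied by [sqrt w]. *)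
Lemma accel_identity (y : R) : 0 < y ->
  3 / 4 * ((y - w1) * (w2 - y) * speed2 y) + 3 / 2 * y * accel y = 3 / y ^ 2 - y ^ 2.
Proof.
  intros Hy. replace (3 / y ^ 2) with (w1 * w2 * ((w1 + w2) ^ 2 - w1 * w2) / 3 / y ^ 2)
    by (rewrite vieta_product; field; lra).
  unfold accel, speed2, dspeed2, cofactor. field. lra.
Qed.

Definition W (x : R) : R := (w1 + w2) / 2 - (w2 - w1) / 2 * cos x.

Lemma W_bounds (x : R) : w1 <= W x <= w2.
Proof. unfold W. pose proof (COS_bound x). nra. Qed.

Lemma W_pos (x : R) : 0 < W x.
Proof. pose proof (W_bounds x). lra. Qed.

Lemma W_sin_sq (x : R) : ((w2 - w1) / 2 * sin x) ^ 2 = (W x - w1) * (w2 - W x).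
Proof.
  pose proof (sin2_cos2 x) as H. unfold Rsqr in H.
  replace (((w2 - w1) / 2 * sin x) ^ 2) with (((w2 - w1) / 2) ^ 2 * (sin x * sin x)) by ring.
  replace (sin x * sin x) with (1 - cos x * cos x) by lra.
  unfold W. field.
Qed.

Lemma is_derive_W (x : R) : is_derive W x ((w2 - w1) / 2 * sin x).
Proof. unfold W. auto_derive; [exact I|]. ring. Qed.

Lemma W_periodic (x : R) : W (x + 2 * PI) = W x.
Proof. unfold W. rewrite <- (cos_period x 1). f_equal. f_equal. f_equal. simpl. ring. Qed.

Definition F (x : R) : R := sqrt (speed2 (W x)).

Lemma F_sq (x : R) : F x ^ 2 = speed2 (W x).
Proof. apply pow2_sqrt, Rlt_le, speed2_pos, W_pos. Qed.

Lemma F_pos (x : R) : 0 < F x.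
Proof. apply sqrt_lt_R0, speed2_pos, W_pos. Qed.

Lemma F_le (x : R) : F x <= sqrt (speed2 w1).
Proof. apply sqrt_le_1_alt, speed2_le, W_bounds. Qed.

Lemma is_derive_F (x : R) :
  is_derive F x ((w2 - w1) / 2 * sin x * dspeed2 (W x) / (2 * F x)).
Proof.
  apply is_derive_sqrt; [|apply speed2_pos, W_pos].
  apply (is_derive_comp speed2 W); [apply is_derive_speed2, W_pos | apply is_derive_W].
Qed.

Lemma F_cont (x : R) : continuous F x.
Proof. apply (ex_derive_continuous F). eexists. apply is_derive_F. Qed.

Lemma F_periodic (x : R) : F (x + 2 * PI) = F x.
Proof. unfold F. rewrite W_periodic. reflexivity. Qed.

Definition V (x : R) : R := (w2 - w1) / 2 * sin x * F x.

Lemma V_sq (x : R) : V x ^ 2 = (W x - w1) * (w2 - W x) * speed2 (W x).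
Proof. unfold V. rewrite <- W_sin_sq, <- F_sq. ring. Qed.

Lemma is_derive_V (x : R) : is_derive V x (accel (W x) / F x).
Proof.
  assert (Hacc : accel (W x) = (w2 - w1) / 2 * cos x * F x ^ 2
                   + ((w2 - w1) / 2 * sin x) ^ 2 * dspeed2 (W x) / 2).
  { unfold accel. rewrite F_sq, W_sin_sq. unfold W at 1. ring. }
  pose proof (F_pos x).
  replace (accel (W x) / F x) with ((w2 - w1) / 2 * cos x * F x
     + (w2 - w1) / 2 * sin x * ((w2 - w1) / 2 * sin x * dspeed2 (W x) / (2 * F x)))
    by (rewrite Hacc; field; lra).
  apply (is_derive_mult (fun y => (w2 - w1) / 2 * sin y) F); [|apply is_derive_F|].
  - auto_derive; [exact I|]. ring.
  - intros; apply Rmult_comm.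
Qed.

Section Trajectory.

Variable psi : R -> R.
Hypothesis psi_flow : forall s, is_derive psi s (F (psi s)).

Definition w_traj (s : R) : R := W (psi s).
Definition v_traj (s : R) : R := V (psi s).
Definition k_traj (s : R) : R := / w_traj s ^ 2.

Lemma w_traj_pos (s : R) : 0 < w_traj s.
Proof. apply W_pos. Qed.

Lemma is_derive_w_traj (s : R) : is_derive w_traj s (v_traj s).
Proof.
  unfold w_traj, v_traj, V. rewrite Rmult_comm.
  apply (is_derive_comp W psi); [apply is_derive_W | apply psi_flow].
Qed.

Lemma is_derive_v_traj (s : R) : is_derive v_traj s (accel (w_traj s)).
Proof.
  unfold v_traj, w_traj. pose proof (F_pos (psi s)).
  replace (accel (W (psi s))) with (F (psi s) * (accel (W (psi s)) / F (psi s))) by (field; lra).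
  apply (is_derive_comp V psi); [apply is_derive_V | apply psi_flow].
Qed.

Lemma v_traj_sq (s : R) :
  v_traj s ^ 2 = (w_traj s - w1) * (w2 - w_traj s) * speed2 (w_traj s).
Proof. apply V_sq. Qed.

Lemma is_derive_k_traj (s : R) : is_derive k_traj s (-2 * v_traj s / w_traj s ^ 3).
Proof.
  pose proof (w_traj_pos s).
  replace (-2 * v_traj s / w_traj s ^ 3)
    with (- (INR 2 * v_traj s * w_traj s ^ 1) / (w_traj s ^ 2) ^ 2) by (simpl; field; lra).
  apply (is_derive_inv (fun t => w_traj t ^ 2)); [|apply pow_nonzero; lra].
  apply is_derive_pow, is_derive_w_traj.
Qed.

Definition z_traj (s : R) : R := sqrt (w_traj s).

Lemma z_traj_pos (s : R) : 0 < z_traj s.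
Proof. apply sqrt_lt_R0, w_traj_pos. Qed.

Lemma z_traj_sq (s : R) : z_traj s ^ 2 = w_traj s.
Proof. apply pow2_sqrt, Rlt_le, w_traj_pos. Qed.

Lemma k_traj_Rpower (s : R) (e : R) : Rpower (k_traj s) e = Rpower (z_traj s) (- (4 * e)).
Proof.
  unfold k_traj. rewrite <- z_traj_sq, <- pow_mult, Rpower_inv_pow_l by apply z_traj_pos.
  f_equal. simpl. ring.
Qed.

Lemma is_derive_z_traj (s : R) : is_derive z_traj s (v_traj s / (2 * z_traj s)).
Proof. apply is_derive_sqrt; [apply is_derive_w_traj | apply w_traj_pos]. Qed.

Definition u_traj (s : R) : R := z_traj s ^ 3.
Definition du_traj (s : R) : R := 3 / 2 * z_traj s * v_traj s.

Lemma k_traj_Rpower_u (s : R) : Rpower (k_traj s) (- (3 / 4)) = u_traj s.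
Proof. rewrite k_traj_Rpower. apply Rpower_nat; [apply z_traj_pos | simpl; lra]. Qed.

Lemma is_derive_u_traj (s : R) : is_derive u_traj s (du_traj s).
Proof.
  pose proof (z_traj_pos s). unfold u_traj, du_traj.
  replace (3 / 2 * z_traj s * v_traj s)
    with (INR 3 * (v_traj s / (2 * z_traj s)) * z_traj s ^ 2) by (simpl; field; lra).
  apply is_derive_pow, is_derive_z_traj.
Qed.

Lemma is_derive_du_traj (s : R) :
  is_derive du_traj s ((3 / z_traj s ^ 4 - z_traj s ^ 4) / z_traj s).
Proof.
  pose proof (z_traj_pos s) as Hz.
  pose proof (accel_identity (w_traj s) (w_traj_pos s)) as Hacc.
  rewrite <- v_traj_sq in Hacc.
  set (A := accel (w_traj s)) in *. set (v := v_traj s) in *.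
  rewrite <- z_traj_sq in Hacc. set (z := z_traj s) in *.
  replace ((3 / z ^ 4 - z ^ 4) / z) with (3 / 2 * (v / (2 * z)) * v + 3 / 2 * z * A).
  - apply (is_derive_mult (fun t => 3 / 2 * z_traj t) v_traj); [| apply is_derive_v_traj |].
    + apply is_derive_scal, is_derive_z_traj.
    + intros; apply Rmult_comm.
  - apply (Rmult_eq_reg_l z); [|lra].
    replace (z * ((3 / z ^ 4 - z ^ 4) / z)) with (3 / (z ^ 2) ^ 2 - (z ^ 2) ^ 2) by (field; lra).
    rewrite <- Hacc. field. lra.
Qed.

Lemma k_traj_is_sol : is_sol d m_infty p_infty k_traj.
Proof.
  split; [exact I|]. intros s _.
  pose proof (w_traj_pos s) as Hw. pose proof (z_traj_pos s) as Hz.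
  assert (Dk : forall t, Derive k_traj t = -2 * v_traj t / w_traj t ^ 3)
    by (intros t; apply is_derive_unique, is_derive_k_traj).
  split; [unfold k_traj; apply Rinv_0_lt_compat, pow_lt, Hw|].
  split; [eexists; apply is_derive_k_traj|].
  split.
  { apply (ex_derive_ext (fun t => -2 * v_traj t / w_traj t ^ 3)); [intros t; symmetry; apply Dk|].
    apply ex_derive_div; [| |apply pow_nonzero; lra].
    - apply ex_derive_scal. eexists. apply is_derive_v_traj.
    - apply ex_derive_pow. eexists. apply is_derive_w_traj. }
  split.
  { rewrite (Derive_n_ext _ u_traj) by apply k_traj_Rpower_u.
    change (Derive_n u_traj 2 s) with (Derive (Derive u_traj) s).
    rewrite (Derive_ext _ du_traj) by (intros t; apply is_derive_unique, is_derive_u_traj).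
    rewrite (is_derive_unique _ _ _ (is_derive_du_traj s)).
    rewrite k_traj_Rpower, (Rpower_neg_nat (z_traj s) _ 3 Hz) by (simpl; lra).
    unfold k_traj. rewrite <- z_traj_sq. field. lra. }
  { assert (Hv : v_traj s ^ 2 = 4 / 9 * quartic d (w_traj s) / w_traj s ^ 2)
      by (rewrite v_traj_sq; apply speed_identity, Hw).
    assert (Hpow : Rpower (k_traj s) (3 / 2) = / w_traj s ^ 3).
    { rewrite k_traj_Rpower, (Rpower_neg_nat (z_traj s) _ 6 Hz) by (simpl; lra).
      rewrite <- z_traj_sq, <- pow_mult. reflexivity. }
    rewrite Dk, Hpow. unfold k_traj.
    replace ((-2 * v_traj s / w_traj s ^ 3) ^ 2) with (4 * v_traj s ^ 2 / w_traj s ^ 6)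
      by (field; lra).
    rewrite Hv. unfold quartic. field. lra. }
Qed.

End Trajectory.

Lemma phase_of_state (w0 v0 : R) : w1 <= w0 <= w2 ->
  v0 ^ 2 = (w0 - w1) * (w2 - w0) * speed2 w0 -> exists x, W x = w0 /\ V x = v0.
Proof.
  intros Hw0 Hv0.
  set (c := ((w1 + w2) / 2 - w0) / ((w2 - w1) / 2)).
  assert (Hc : -1 <= c <= 1).
  { unfold c. split; [apply Rle_div_r | apply Rle_div_l]; lra. }
  set (x := if Rle_dec 0 v0 then acos c else - acos c).
  assert (HW : W x = w0).
  { unfold W, x. destruct (Rle_dec 0 v0); rewrite ?cos_neg, cos_acos by exact Hc;
      unfold c; field; lra. }
  exists x. split; [exact HW|].
  assert (Hsq : V x ^ 2 = v0 ^ 2) by (rewrite V_sq, HW, Hv0; reflexivity).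
  pose proof (F_pos x). pose proof (sqrt_pos (1 - c²)).
  unfold V, x in *. destruct (Rle_dec 0 v0) as [Hpos | Hneg].
  - rewrite sin_acos in * by exact Hc.
    assert (0 <= (w2 - w1) / 2 * sqrt (1 - c²) * F (acos c)) by (apply Rmult_le_pos; nra).
    nra.
  - rewrite sin_neg, sin_acos in * by exact Hc.
    assert (0 <= (w2 - w1) / 2 * sqrt (1 - c²) * F (- acos c)) by (apply Rmult_le_pos; nra).
    nra.
Qed.

End ExplicitSolution.

Lemma periodic_solution_through (d w1 w2 kappa0 kappa1 s0 : R) :
  0 < w1 < w2 -> quartic d w1 = 0 -> quartic d w2 = 0 -> 0 < kappa0 ->
  kappa1 ^ 2 = 16 / 9 * kappa0 ^ 2 * (16 * d * Rpower kappa0 (3 / 2) - 9 * kappa0 ^ 2 - 1) ->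
  exists (kc : R -> R) (T : R), is_sol d m_infty p_infty kc /\
    kc s0 = kappa0 /\ Derive kc s0 = kappa1 /\ 0 < T /\ forall s, kc (s + T) = kc s.
Proof.
  intros Hw R1 R2 Hk0 Hk1.
  set (w0 := Rpower kappa0 (- (1 / 2))).
  assert (Hw0 : 0 < w0) by apply Rpower_gt_0.
  assert (Hk0w : kappa0 = / w0 ^ 2).
  { rewrite <- (Rpower_nat _ 2 2 Hw0) by (simpl; lra). unfold w0. rewrite Rpower_mult.
    replace (- (1 / 2) * 2) with (Ropp 1) by field.
    rewrite Rpower_Ropp, Rpower_1, Rinv_inv by exact Hk0. reflexivity. }
  set (v0 := - (1 / 2) * kappa1 * w0 ^ 3).
  assert (Hv0 : v0 ^ 2 = (w0 - w1) * (w2 - w0) * speed2 w1 w2 w0).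
  { rewrite (speed_identity d) by assumption.
    rewrite Hk0w, (Rpower_inv_pow_l w0 _ 2 Hw0), (Rpower_neg_nat w0 _ 3 Hw0) in Hk1 by (simpl; lra).
    unfold v0, quartic. replace ((- (1 / 2) * kappa1 * w0 ^ 3) ^ 2) with (kappa1 ^ 2 * w0 ^ 6 / 4)
      by field.
    rewrite Hk1. field. lra. }
  assert (Hrange : w1 <= w0 <= w2).
  { pose proof (speed2_pos w1 w2 Hw w0 Hw0) as Hs. pose proof (pow2_ge_0 v0) as Hsq.
    assert (0 <= (w0 - w1) * (w2 - w0)).
    { destruct (Rle_lt_dec 0 ((w0 - w1) * (w2 - w0))) as [Hp | Hn]; [exact Hp | nra]. }
    split; nra. }
  destruct (phase_of_state w1 w2 Hw w0 v0 Hrange Hv0) as (x0 & HWx & HVx).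
  destruct (periodic_flow (F w1 w2) (sqrt (speed2 w1 w2 w1)) (2 * PI) x0 s0)
    as (psi & T & HT & Hpsi0 & Hflow & Hper).
  { apply F_cont; assumption. }
  { intros x. split; [apply F_pos | apply F_le]; assumption. }
  { apply F_periodic. }
  { pose proof PI_RGT_0. lra. }
  exists (k_traj w1 w2 psi), T. split; [|split; [|split; [|split]]].
  - apply k_traj_is_sol; assumption.
  - unfold k_traj, w_traj. rewrite Hpsi0, HWx, Hk0w. reflexivity.
  - rewrite (is_derive_unique _ _ _ (is_derive_k_traj w1 w2 Hw psi Hflow s0)).
    unfold v_traj, w_traj. rewrite Hpsi0, HWx, HVx. unfold v0. field. lra.
  - exact HT.
  - intros s. unfold k_traj, w_traj. rewrite Hper, W_periodic. reflexivity.
Qed.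

Lemma continuity_quartic (d : R) : continuity (quartic d).
Proof.
  intros x. apply derivable_continuous_pt. exists (16 * d - 4 * x ^ 3).
  apply is_derive_Reals. unfold quartic. auto_derive; [exact I|]. ring.
Qed.

(* [d > d_*] is exactly the condition [quartic d (3^(1/4)) > 0], as [27^(1/4) * 3^(1/4) = 3]. *)
Lemma quartic_pos_at_d_star (d : R) : d_star < d -> 0 < quartic d (Rpower 3 (1 / 4)).
Proof.
  unfold d_star, quartic. intros Hd.
  assert (H3 : 0 < Rpower 3 (1 / 4)) by apply Rpower_gt_0.
  assert (E4 : Rpower 3 (1 / 4) ^ 4 = 3).
  { rewrite <- (Rpower_nat _ 4 4 H3), Rpower_mult by (simpl; lra).
    replace (1 / 4 * 4) with 1 by field. apply Rpower_1. lra. }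
  assert (E : Rpower 27 (1 / 4) * Rpower 3 (1 / 4) = 3).
  { rewrite Rpower_mult_distr by lra. replace (27 * 3) with (3 ^ 4) by ring.
    rewrite Rpower_pow_l by lra. replace (INR 4 * (1 / 4)) with 1 by (simpl; field).
    apply Rpower_1. lra. }
  rewrite E4. nra.
Qed.

Lemma quartic_roots (d : R) : d_star < d ->
  exists w1 w2, 0 < w1 < w2 /\ quartic d w1 = 0 /\ quartic d w2 = 0.
Proof.
  intros Hd. pose proof (quartic_pos_at_d_star d Hd) as Hpos.
  set (y0 := Rpower 3 (1 / 4)) in *.
  assert (Hy0 : 0 < y0) by apply Rpower_gt_0.
  assert (Hd0 : 0 < d) by (unfold d_star in Hd; pose proof (Rpower_gt_0 27 (1 / 4)); lra).
  set (X := 16 * d + y0 + 1).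
  assert (HX : quartic d X < 0).
  { unfold quartic. assert (1 <= X) by (unfold X; lra).
    assert (16 * d * X < X * X) by (apply Rmult_lt_compat_r; unfold X in *; lra).
    assert (X * X <= X ^ 4).
    { replace (X ^ 4) with ((X * X) * (X * X)) by ring.
      assert (1 <= X * X) by nra. nra. }
    lra. }
  assert (H0 : quartic d 0 < 0) by (unfold quartic; lra).
  destruct (IVT (quartic d) 0 y0 (continuity_quartic d) Hy0 H0 Hpos) as (w1 & Hw1 & E1).
  destruct (IVT (fun x => - quartic d x) y0 X) as (w2 & Hw2 & E2).
  - intros x. apply continuity_pt_opp, continuity_quartic.
  - unfold X. lra.
  - lra.
  - lra.
  - exists w1, w2. assert (w1 <> 0) by (intros ->; lra).
    assert (w1 <> y0) by (intros ->; lra). assert (w2 <> y0) by (intros ->; lra).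
    repeat split; lra.
Qed.

Lemma exists_in_int (a b : Rbar) : Rbar_lt a b -> exists s, in_int a b s.
Proof.
  destruct a as [x | |]; destruct b as [y | |]; simpl; intros H; try contradiction.
  - exists ((x + y) / 2). split; simpl; lra.
  - exists (x + 1). split; simpl; auto; lra.
  - exists (y - 1). split; simpl; auto; lra.
  - exists 0. split; simpl; auto.
Qed.

Theorem mainTheorem6 (d : R) (a b : Rbar) (k : R -> R) :
  d_star < d ->
  maximal_sol d a b k ->
  nonconstant_on a b k ->
  a = m_infty /\ b = p_infty /\
  exists T : R, 0 < T /\ forall s : R, k (s + T) = k s.
Proof.
  intros Hd [Hsol Hmax] _.
  destruct (quartic_roots d Hd) as (w1 & w2 & Hw & R1 & R2).
  destruct (exists_in_int a b (proj1 Hsol)) as [s0 Hs0].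
  destruct (proj2 Hsol s0 Hs0) as (Hk0 & _ & _ & _ & Hfirst).
  destruct (periodic_solution_through d w1 w2 (k s0) (Derive k s0) s0 Hw R1 R2 Hk0 Hfirst)
    as (kc & T & Hkc & E0 & E1 & HT & Hper).
  assert (Hext : forall s, in_int a b s -> kc s = k s).
  { intros s Hs. symmetry. apply (is_sol_unique d a b k kc s0 Hsol); auto.
    apply (is_sol_restrict d a b m_infty p_infty);
      [now destruct a | now destruct b | apply Hsol | exact Hkc]. }
  destruct (Hmax m_infty p_infty kc) as [<- <-];
    [now destruct a | now destruct b | exact Hkc | exact Hext |].
  repeat split. exists T. split; [exact HT|].
  intros s. rewrite <- !Hext by (split; exact I). apply Hper.
Qed.
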